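(* Let $0<\varepsilon<1$ be arbitrary and let $n$ be a sufficiently large positive integer. Let $d=4\log n$, $m=n^2 2^d$, and sample $\mathcal{F}\sim\mathcal{F}(m,n,d)$. Then with high probability, every set $S$ of clauses of $\mathcal{F}$ of size $s\le n/(e d^2)$ satisfies $|\mathrm{vars}(S)|\ge(1-\varepsilon)ds$.
   Context: $\log$ is base 2. $\mathcal{F}(m,n,d)$: random $d$-CNF on $n$ variables with $m$ clauses sampled independently and uniformly with replacement from the $\binom{n}{d}2^d$ clauses on $d$ distinct variables. For a set $S$ of clauses, $\mathrm{vars}(S)$ is the set of variables appearing in some clause of $S$. ''With high probability'' means with probability tending to $1$ as $n\to\infty$. *)

From Stdlib Require Import Reals ClassicalEpsilon.
From mathcomp Require Import all_boot.
Set Implicit Arguments. Unset Strict Implicit. Unset Printing Implicit Defensive.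

Definition lit (n : nat) := ('I_n * bool)%type.

(* A d-clause on d distinct variables: a set of d literals, no variable twice
   (so there are exactly 'C(n,d) * 2^d of them). *)
Definition is_clause (n d : nat) (C : {set lit n}) : bool :=
  (#|C| == d) &&
  [forall x : 'I_n, ~~ (((x, true) \in C) && ((x, false) \in C))].

(* A formula with m clauses sampled independently with replacement is an
   m-indexed family of clauses; the sample space of F(m,n,d), with the uniform
   distribution, is the set of all such families. *)
Definition formulas (m n d : nat) : {set {ffun 'I_m -> {set lit n}}} :=
  [set F : {ffun 'I_m -> {set lit n}} | [forall i, is_clause d (F i)]].

Definition vars (m n : nat) (F : {ffun 'I_m -> {set lit n}}) (S : {set 'I_m})
  : {set 'I_n} := [set l.1 | l in \bigcup_(i in S) F i].

(* d = 4 log2 n, rounded down: floor(log2 (n^4)) *)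
Definition dd (n : nat) : nat := trunc_log 2 (n ^ 4).
Definition mm (n : nat) : nat := n ^ 2 * 2 ^ dd n.

Definition expanding (eps : R) (m n d : nat) (F : {ffun 'I_m -> {set lit n}}) : Prop :=
  forall S : {set 'I_m},
    Rle (INR #|S|) (Rdiv (INR n) (Rmult (exp 1) (pow (INR d) 2))) ->
    Rle (Rmult (Rmult (Rminus 1 eps) (INR d)) (INR #|S|)) (INR #|vars F S|).

Definition pb (P : Prop) : bool :=
  if excluded_middle_informative P then true else false.

Definition prob_expanding (eps : R) (m n d : nat) : R :=
  Rdiv (INR #|[set F in formulas m n d | pb (expanding eps d F) ]|)
       (INR #|formulas m n d|).

From Stdlib Require Import Reals Lra Lia Classical ClassicalEpsilon.
From mathcomp Require Import all_boot zify.

Set Implicit Arguments.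
Unset Strict Implicit.
Unset Printing Implicit Defensive.

(* [all_boot] binds the key %R to its ring scope; give it back to Stdlib's reals. *)
Delimit Scope R_scope with R.

(* First-moment method. If F is not expanding, some set S of s clauses spans a
   set V of v < (1 - eps) d s variables, so every clause indexed by S lives on V;
   for fixed (S, V) this has probability at most (C(2v, d) / C(n, d))^s <= (4v/n)^(ds).
   Summing over the C(m, s) C(n, v) choices of (S, V) and using
   C(n, v) (v/n)^v <= e^v and v/n <= 1/d, each pair of sizes (s, v) contributes
   at most x^s <= x, where x = m (4 e d^-eps)^d. Since (m + 1)(n + 1) m <= 18 32^d,
   the failure probability is at most 18 (128 e d^-eps)^d, which vanishes as
   d = floor(4 log n) grows. *)

Lemma pbP (P : Prop) : reflect P (pb P).
Proof. by rewrite /pb; case: excluded_middle_informative => h; constructor. Qed.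

Lemma INR_muln a b : INR (a * b) = (INR a * INR b)%R.
Proof. by rewrite mulnE mult_INR. Qed.

Lemma INR_expn a k : INR (a ^ k) = (INR a ^ k)%R.
Proof. by elim: k => [|k IH]; rewrite ?expn0 // expnS INR_muln IH. Qed.

Lemma INR_subn a b : b <= a -> INR (a - b) = (INR a - INR b)%R.
Proof. by move=> /leP ba; rewrite subnE minus_INR. Qed.

Lemma le_INRn a b : a <= b -> (INR a <= INR b)%R.
Proof. by move=> /leP; apply: le_INR. Qed.

Lemma leq_expn2r a b k : a <= b -> a ^ k <= b ^ k.
Proof. by case: k => [|k] ab; rewrite ?expn0 ?leq_exp2r. Qed.

Lemma ffact_le_expn a k : a ^_ k <= a ^ k.
Proof.
rewrite ffact_prod; apply: (@leq_trans (\prod_(i < k) a)).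
  by apply: leq_prod => i _; apply: leq_subr.
by rewrite prod_nat_const card_ord.
Qed.

Lemma expn_subn_le_ffact a k : (a - k) ^ k <= a ^_ k.
Proof.
rewrite ffact_prod; apply: (@leq_trans (\prod_(i < k) (a - k))).
  by rewrite prod_nat_const card_ord.
by apply: leq_prod => i _; have := ltn_ord i; lia.
Qed.

Lemma bin_fact_le_expn a k : 'C(a, k) * k`! <= a ^ k.
Proof. by rewrite bin_ffact ffact_le_expn. Qed.

Lemma bin_le_expn a k : 'C(a, k) <= a ^ k.
Proof. exact: leq_trans (leq_pmulr _ (fact_gt0 k)) (bin_fact_le_expn a k). Qed.

Lemma bin_double_mul_le a v d : 2 * d <= a ->
  'C(2 * v, d) * a ^ d <= 'C(a, d) * (4 * v) ^ d.
Proof.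
move=> d_le; rewrite -(leq_pmul2r (fact_gt0 d)).
rewrite mulnAC [X in _ <= X]mulnAC !bin_ffact.
apply: leq_trans (leq_mul (ffact_le_expn _ _) (leqnn _)) _.
apply: (@leq_trans ((2 * v) ^ d * (2 * (a - d)) ^ d)).
  by rewrite leq_mul2l leq_expn2r ?orbT //; lia.
rewrite -expnMn [X in _ <= X]mulnC (_ : 2 * v * (2 * (a - d)) = 4 * v * (a - d)); last lia.
by rewrite expnMn leq_mul2l expn_subn_le_ffact orbT.
Qed.

Lemma card_ffun_family (aT rT : finType) (G : aT -> {set rT}) :
  #|[set f : {ffun aT -> rT} | [forall x, f x \in G x]]| = \prod_x #|G x|.
Proof.
have -> : #|[set f : {ffun aT -> rT} | [forall x, f x \in G x]]| =
          #|(family (fun x => mem (G x)) : simpl_pred _)|.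
  by apply: eq_card => f; rewrite inE; apply/forallP/familyP.
by rewrite card_family foldrE big_map big_enum.
Qed.

Lemma sum_draws_const (T : finType) k c :
  \sum_(A : {set T} | #|A| == k) c = 'C(#|T|, k) * c.
Proof. by rewrite -card_draws -sum_nat_const; apply: eq_bigl => A; rewrite inE. Qed.

Lemma card_bigcup_le (T I : finType) (P : pred I) (F : I -> {set T}) :
  #|\bigcup_(i | P i) F i| <= \sum_(i | P i) #|F i|.
Proof.
apply: (big_ind2 (fun (A : {set T}) k => #|A| <= k)) => [|A a B b le_A le_B|//].
  by rewrite cards0.
exact: leq_trans (leq_card_setU A B).1 (leq_add le_A le_B).
Qed.

Lemma INR_sum_le_card (I : finType) (P : pred I) (f : I -> nat) (c : R) :
  (0 <= c)%R -> (forall i, P i -> INR (f i) <= c)%R ->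
  (INR (\sum_(i | P i) f i) <= INR #|I| * c)%R.
Proof.
move=> c_ge0 f_le; apply: (Rle_trans _ (INR (\sum_(i | P i) 1) * c)).
  apply: (big_ind2 (fun a b => INR a <= INR b * c)%R) => [|a a' b b' le_a le_b|i /f_le].
  - by rewrite Rmult_0_l; right.
  - by rewrite !addnE !plus_INR; lra.
  - by rewrite Rmult_1_l.
apply: Rmult_le_compat_r => //; apply: le_INRn.
by rewrite sum1_card max_card.
Qed.

Lemma succ_pow_le_exp v : (INR v.+1 ^ v <= INR v ^ v * exp 1)%R.
Proof.
case: v => [|v]; first by rewrite /=; have := exp_ineq1_le 1; lra.
have v_gt0 : (0 < INR v.+1)%R by apply: lt_0_INR; lia.
have -> : INR v.+2 = (INR v.+1 * (1 + / INR v.+1))%R by rewrite S_INR; field; lra.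
rewrite Rpow_mult_distr; apply: Rmult_le_compat_l; first by apply: pow_le; lra.
have <- : (exp (/ INR v.+1) ^ v.+1 = exp 1)%R.
  rewrite -Rpower_pow; last exact: exp_pos.
  by rewrite /Rpower ln_exp; congr exp; field; lra.
apply: pow_incr; split; last exact: exp_ineq1_le.
by have := Rinv_0_lt_compat _ v_gt0; lra.
Qed.

Lemma pow_le_fact_exp v : (INR v ^ v <= INR v`! * exp 1 ^ v)%R.
Proof.
elim: v => [|v IH]; first by rewrite /=; lra.
rewrite factS INR_muln.
have -> : (INR v.+1 ^ v.+1 = INR v.+1 * INR v.+1 ^ v)%R by [].
have -> : (exp 1 ^ v.+1 = exp 1 ^ v * exp 1)%R by rewrite /=; ring.
rewrite Rmult_assoc; apply: Rmult_le_compat_l; first exact: pos_INR.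
apply: Rle_trans (succ_pow_le_exp v) _; rewrite -Rmult_assoc.
by apply: Rmult_le_compat_r => //; apply: Rlt_le; apply: exp_pos.
Qed.

Lemma bin_mul_ratio_le_exp n v : 0 < n ->
  (INR 'C(n, v) * (INR v / INR n) ^ v <= exp 1 ^ v)%R.
Proof.
move=> n_gt0; have nR_gt0 : (0 < INR n ^ v)%R by apply: pow_lt; apply: lt_0_INR; lia.
rewrite /Rdiv Rpow_mult_distr pow_inv -Rmult_assoc.
apply: (Rmult_le_reg_r (INR n ^ v)) => //.
rewrite Rmult_assoc Rinv_l ?Rmult_1_r; last lra.
have binR : (INR 'C(n, v) * INR v`! <= INR n ^ v)%R.
  by rewrite -INR_muln -INR_expn; apply: le_INRn; apply: bin_fact_le_expn.
have := pow_le_fact_exp v; have := pos_INR 'C(n, v); have := pow_lt _ v (exp_pos 1).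
nra.
Qed.

Lemma pow_le_self (x : R) s : (0 <= x <= 1)%R -> 0 < s -> (x ^ s <= x)%R.
Proof.
case: s => // s x_bounds _; rewrite -[X in (_ <= X)%R]Rmult_1_r.
apply: Rmult_le_compat_l; first lra.
by apply: (Rle_trans _ (1 ^ s)); [apply: pow_incr; lra | rewrite pow1; lra].
Qed.

Lemma pow_le_Rpower_opp (q D a : R) k : (0 <= q)%R -> (1 <= D)%R ->
  (q * D <= 1)%R -> (a <= INR k)%R -> (q ^ k <= Rpower D (- a))%R.
Proof.
move=> q_ge0 D_ge1 qD_le1 a_le_k.
apply: (Rle_trans _ ((/ D) ^ k)).
  apply: pow_incr; split => //; apply: (Rmult_le_reg_r D); first lra.
  by rewrite Rinv_l; lra.
rewrite pow_inv -Rpower_pow -?Rpower_Ropp; last lra.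
by apply: Rle_Rpower => //; lra.
Qed.

Section Counting.
Variables n d : nat.

Definition clauses : {set {set lit n}} := [set C | is_clause d C].
Definition clause_vars (C : {set lit n}) : {set 'I_n} := [set l.1 | l in C].
Definition clauses_within (V : {set 'I_n}) : {set {set lit n}} :=
  [set C in clauses | clause_vars C \subset V].
Definition confined m (S : {set 'I_m}) (V : {set 'I_n}) :
    {set {ffun 'I_m -> {set lit n}}} :=
  [set F in formulas m n d | vars F S \subset V].

Lemma card_formulas m : #|formulas m n d| = #|clauses| ^ m.
Proof.
rewrite -[m in RHS]card_ord -prod_nat_const -card_ffun_family.
by apply: eq_card => F; rewrite !inE; apply: eq_forallb => i; rewrite inE.
Qed.

Lemma vars_subsetE m (F : {ffun 'I_m -> {set lit n}}) (S : {set 'I_m}) (V : {set 'I_n}) :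
  (vars F S \subset V) = [forall (i | i \in S), clause_vars (F i) \subset V].
Proof.
apply/subsetP/forall_inP => [sub i iS | sub _ /imsetP[l /bigcupP[i iS li] ->]].
  apply/subsetP => _ /imsetP[l li ->]; apply: sub.
  by apply/imsetP; exists l => //; apply/bigcupP; exists i.
by apply: (subsetP (sub i iS)); apply/imsetP; exists l.
Qed.

Lemma card_confined m (S : {set 'I_m}) (V : {set 'I_n}) :
  #|confined S V| = #|clauses_within V| ^ #|S| * #|clauses| ^ #|~: S|.
Proof.
pose G (i : 'I_m) := if i \in S then clauses_within V else clauses.
have -> : confined S V = [set F : {ffun 'I_m -> {set lit n}} | [forall i, F i \in G i]].
  apply/setP => F; rewrite !inE vars_subsetE.
  apply/andP/forallP => [[/forallP clF /forall_inP sub] i | GF].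
    by rewrite /G; case: ifP => iS; rewrite !inE clF ?sub.
  split; first by apply/forallP => i; have := GF i; rewrite /G; case: ifP; rewrite !inE => // _ /andP[].
  by apply/forall_inP => i iS; have := GF i; rewrite /G iS !inE => /andP[].
rewrite card_ffun_family (bigID [in S]) /=.
rewrite (eq_bigr (fun=> #|clauses_within V|)) => [|i]; last by rewrite /G => ->.
rewrite [X in _ * X](eq_bigr (fun=> #|clauses|)) => [|i]; last by rewrite /G => /negbTE ->.
by rewrite !prod_nat_const; congr (_ * _ ^ _); apply: eq_card => i; rewrite inE.
Qed.

Lemma card_clauses_within_le V : #|clauses_within V| <= 'C(2 * #|V|, d).
Proof.
rewrite (_ : 2 * #|V| = #|setX V [set: bool]|); last by rewrite cardsX cardsT card_bool mulnC.
rewrite -cards_draws; apply: subset_leq_card; apply/subsetP => C.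
rewrite !inE /is_clause => /andP[/andP[/eqP-> _] sub]; rewrite eqxx andbT.
apply/subsetP => l lC; rewrite !inE andbT; apply: (subsetP sub).
by apply/imsetP; exists l.
Qed.

Lemma bin_le_card_clauses : 'C(n, d) <= #|clauses|.
Proof.
pose positive (X : {set 'I_n}) : {set lit n} := setX X [set true].
have positive_inj : injective positive.
  move=> X Y /setP XY; apply/setP => x.
  by have := XY (x, true); rewrite !inE /= !andbT.
rewrite -[n in 'C(n, _)]card_ord -card_draws -(card_imset _ positive_inj).
apply: subset_leq_card; apply/subsetP => C /imsetP[X]; rewrite inE => /eqP cardX ->.
rewrite inE /is_clause cardsX cards1 muln1 cardX eqxx /=.
by apply/forallP => x; rewrite !inE /= !andbF.
Qed.

Lemma card_confined_le m (S : {set 'I_m}) V : 2 * d <= n ->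
  #|confined S V| * n ^ (d * #|S|) <= #|formulas m n d| * (4 * #|V|) ^ (d * #|S|).
Proof.
move=> d_le_n.
have per_clause : #|clauses_within V| * n ^ d <= #|clauses| * (4 * #|V|) ^ d.
  apply: leq_trans (leq_mul (card_clauses_within_le V) (leqnn _)) _.
  apply: leq_trans (bin_double_mul_le #|V| d_le_n) _.
  by rewrite leq_mul2r bin_le_card_clauses orbT.
rewrite card_confined card_formulas.
rewrite [#|clauses| ^ m](_ : _ = #|clauses| ^ #|S| * #|clauses| ^ #|~: S|); last first.
  by rewrite -expnD cardsC card_ord.
rewrite !expnM mulnAC -expnMn [X in _ <= X]mulnAC -expnMn.
by rewrite leq_mul2r leq_expn2r ?orbT.
Qed.

End Counting.

Definition rate (eps : R) (d : nat) : R := (4 * exp 1 * Rpower (INR d) (- eps))%R.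

Lemma rate_ge0 eps d : (0 <= rate eps d)%R.
Proof.
apply: Rmult_le_pos; first by have := exp_pos 1; lra.
by apply: Rlt_le; apply: exp_pos.
Qed.

Lemma ratio_pow_le_Rpower eps n d s v : 0 < n -> 0 < d -> v <= d * s ->
  (INR v * INR d <= INR n)%R -> (INR v <= (1 - eps) * INR d * INR s)%R ->
  ((INR v / INR n) ^ (d * s - v) <= Rpower (INR d) (- eps) ^ (d * s))%R.
Proof.
move=> n_gt0 d_gt0 v_le_ds vd_le_n v_le.
have nR_gt0 : (0 < INR n)%R by apply: lt_0_INR; lia.
rewrite -(Rpower_pow (d * s) (Rpower (INR d) (- eps))); last exact: exp_pos.
rewrite Rpower_mult -Ropp_mult_distr_l; apply: pow_le_Rpower_opp.
- by apply: Rmult_le_pos; [apply: pos_INR | apply: Rlt_le; apply: Rinv_0_lt_compat].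
- exact: (@le_INRn 1).
- by apply: (Rmult_le_reg_r (INR n)) => //; field_simplify; lra.
- by rewrite INR_subn // INR_muln; lra.
Qed.

Lemma binomial_term_le eps n d m s v : (0 <= eps)%R -> 0 < n -> 0 < d ->
  (INR v * INR d <= INR n)%R -> (INR v <= (1 - eps) * INR d * INR s)%R ->
  (INR 'C(m, s) * INR 'C(n, v) * (4 * INR v / INR n) ^ (d * s)
     <= (INR m * rate eps d ^ d) ^ s)%R.
Proof.
move=> eps_ge0 n_gt0 d_gt0 vd_le_n v_le.
have nR_gt0 : (0 < INR n)%R by apply: lt_0_INR; lia.
have ds_R : INR (d * s) = (INR d * INR s)%R by rewrite INR_muln.
have ds_ge0 := Rmult_le_pos _ _ (pos_INR d) (pos_INR s).
have v_le_ds : v <= d * s by apply/leP; apply: INR_le; rewrite ds_R; nra.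
set q := (INR v / INR n)%R.
have q_ge0 : (0 <= q)%R.
  by apply: Rmult_le_pos; [apply: pos_INR | apply: Rlt_le; apply: Rinv_0_lt_compat].
set w := Rpower (INR d) (- eps).
have m_bound : (INR 'C(m, s) <= INR m ^ s)%R.
  by rewrite -INR_expn; apply: le_INRn; apply: bin_le_expn.
have head_bound : (INR 'C(n, v) * q ^ v <= exp 1 ^ (d * s))%R.
  apply: Rle_trans (bin_mul_ratio_le_exp v n_gt0) _.
  by apply: Rle_pow => //; [have := exp_ineq1_le 1; lra | apply/leP].
have tail_bound := ratio_pow_le_Rpower n_gt0 d_gt0 v_le_ds vd_le_n v_le.
(* The factor q^v is absorbed by C(n, v); the remaining q^(ds - v) yields d^(-eps d s). *)
have -> : ((4 * INR v / INR n) ^ (d * s) = 4 ^ (d * s) * q ^ v * q ^ (d * s - v))%R.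
  by rewrite Rmult_assoc -pow_add plusE subnKC // -Rpow_mult_distr /q /Rdiv Rmult_assoc.
have -> : ((INR m * rate eps d ^ d) ^ s
   = INR m ^ s * 4 ^ (d * s) * exp 1 ^ (d * s) * w ^ (d * s))%R.
  by rewrite /rate -/w mulnE !pow_mult !Rpow_mult_distr; ring.
have four_ge0 : (0 <= 4 ^ (d * s))%R by apply: pow_le; lra.
have head_ge0 : (0 <= INR 'C(n, v) * q ^ v)%R.
  by apply: Rmult_le_pos; [apply: pos_INR | apply: pow_le].
apply: (Rle_trans _ (4 ^ (d * s) * INR 'C(m, s) * (INR 'C(n, v) * q ^ v)
                      * q ^ (d * s - v))); first by right; ring.
apply: (Rle_trans _ (4 ^ (d * s) * INR m ^ s * exp 1 ^ (d * s) * w ^ (d * s)));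
  last by right; ring.
have Cm_ge0 := pos_INR 'C(m, s).
apply: Rmult_le_compat => //; first by apply: Rmult_le_pos => //; apply: Rmult_le_pos.
  exact: pow_le.
apply: Rmult_le_compat => //; first exact: Rmult_le_pos.
exact: Rmult_le_compat_l.
Qed.

Section UnionBound.
Variables (eps : R) (n d m : nat).

Definition nonexpanding : {set {ffun 'I_m -> {set lit n}}} :=
  [set F in formulas m n d | ~~ pb (expanding eps d F)].

Definition violating_sizes (s v : nat) : bool :=
  pb (INR s <= INR n / (exp 1 * INR d ^ 2) /\ INR v < (1 - eps) * INR d * INR s)%R.

Lemma nonexpanding_sub_confined :
  nonexpanding \subset
  \bigcup_(p : 'I_m.+1 * 'I_n.+1 | violating_sizes p.1 p.2)
    \bigcup_(S : {set 'I_m} | #|S| == p.1)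
      \bigcup_(V : {set 'I_n} | #|V| == p.2) confined d S V.
Proof.
apply/subsetP => F; rewrite inE => /andP[F_in /pbP not_exp].
have [S S_violates] := not_all_ex_not _ _ not_exp.
have [S_small /Rnot_le_lt S_sparse] := imply_to_and _ _ S_violates.
have S_lt : #|S| < m.+1 by rewrite ltnS -[m in _ <= m]card_ord max_card.
have V_lt : #|vars F S| < n.+1 by rewrite ltnS -[n in _ <= n]card_ord max_card.
apply/bigcupP; exists (inord #|S|, inord #|vars F S|).
  by rewrite /= !inordK //; apply/pbP; split => //; lra.
apply/bigcupP; exists S; first by rewrite /= inordK.
apply/bigcupP; exists (vars F S); first by rewrite /= inordK.
by rewrite inE F_in subxx.
Qed.

Lemma card_confined_sum_le s v : 2 * d <= n ->
  (\sum_(S : {set 'I_m} | #|S| == s) \sum_(V : {set 'I_n} | #|V| == v) #|confined d S V|)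
    * n ^ (d * s) <= 'C(m, s) * 'C(n, v) * (#|formulas m n d| * (4 * v) ^ (d * s)).
Proof.
move=> d_le_n; rewrite big_distrl /=.
apply: (@leq_trans (\sum_(S : {set 'I_m} | #|S| == s) \sum_(V : {set 'I_n} | #|V| == v)
                      #|formulas m n d| * (4 * v) ^ (d * s))).
  apply: leq_sum => S /eqP <-; rewrite big_distrl /=.
  by apply: leq_sum => V /eqP <-; apply: card_confined_le.
by rewrite !sum_draws_const !card_ord mulnA.
Qed.

Lemma violating_sizes_gt0 s v : violating_sizes s v -> 0 < s.
Proof. by case: s => // /pbP[_]; rewrite Rmult_0_r; have := pos_INR v; lra. Qed.

Lemma violating_sizes_vars_le s v : (0 <= eps)%R -> 0 < d -> violating_sizes s v ->
  (INR v * INR d <= INR n)%R.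
Proof.
move=> eps_ge0 d_gt0 /pbP[s_small v_sparse].
have e_ge1 : (1 <= exp 1)%R by have := exp_ineq1_le 1; lra.
have K_gt0 : (0 < exp 1 * INR d ^ 2)%R.
  by have := exp_pos 1; have := lt_0_INR d (ltP d_gt0); nra.
have : (INR s * (exp 1 * INR d ^ 2) <= INR n)%R.
  have := Rmult_le_compat_r _ _ _ (Rlt_le _ _ K_gt0) s_small.
  by rewrite /Rdiv Rmult_assoc Rinv_l ?Rmult_1_r; lra.
have v_le_ds : (INR v <= INR d * INR s)%R.
  by have := Rmult_le_pos _ _ (pos_INR d) (pos_INR s); nra.
have := Rmult_le_compat_r _ _ _ (pos_INR d) v_le_ds.
have := Rmult_le_pos _ _ (pos_INR s) (pow2_ge_0 (INR d)); nra.
Qed.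

Lemma violating_block_le s v : (0 <= eps)%R -> 0 < n -> 0 < d -> 2 * d <= n ->
  violating_sizes s v -> (0 <= INR m * rate eps d ^ d <= 1)%R ->
  (INR (\sum_(S : {set 'I_m} | #|S| == s) \sum_(V : {set 'I_n} | #|V| == v) #|confined d S V|)
    <= INR #|formulas m n d| * (INR m * rate eps d ^ d))%R.
Proof.
move=> eps_ge0 n_gt0 d_gt0 d_le_n viol x_bounds.
have xs_le_x := pow_le_self x_bounds (violating_sizes_gt0 viol).
have vd_le_n := violating_sizes_vars_le eps_ge0 d_gt0 viol.
move/pbP: viol => [_ v_sparse].
have nR_gt0 : (0 < INR n)%R by apply: lt_0_INR; lia.
have term := binomial_term_le m eps_ge0 n_gt0 d_gt0 vd_le_n (Rlt_le _ _ v_sparse).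
have count := le_INRn (card_confined_sum_le s v d_le_n).
rewrite !INR_muln !INR_expn INR_muln (_ : INR 4 = 4%R) in count; last by rewrite /=; ring.
have npow_gt0 : (0 < INR n ^ (d * s))%R by apply: pow_lt.
apply: (Rmult_le_reg_r _ _ _ npow_gt0); apply: Rle_trans count _.
have -> : ((4 * INR v) ^ (d * s) = (4 * INR v / INR n) ^ (d * s) * INR n ^ (d * s))%R.
  by rewrite -Rpow_mult_distr; congr pow; field; lra.
apply: (Rle_trans _ (INR #|formulas m n d|
   * (INR 'C(m, s) * INR 'C(n, v) * (4 * INR v / INR n) ^ (d * s)) * INR n ^ (d * s)));
  first by right; ring.
apply: Rmult_le_compat_r; first exact: Rlt_le.
by apply: Rmult_le_compat_l; [apply: pos_INR | apply: Rle_trans term xs_le_x].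
Qed.

Lemma card_nonexpanding_le : (0 <= eps)%R -> 0 < n -> 0 < d -> 2 * d <= n ->
  (0 <= INR m * rate eps d ^ d <= 1)%R ->
  (INR #|nonexpanding|
     <= INR (m.+1 * n.+1) * (INR #|formulas m n d| * (INR m * rate eps d ^ d)))%R.
Proof.
move=> eps_ge0 n_gt0 d_gt0 d_le_n x_bounds.
apply: Rle_trans (le_INRn (subset_leq_card nonexpanding_sub_confined)) _.
apply: Rle_trans (le_INRn (card_bigcup_le _ _)) _.
rewrite -[m.+1 in X in (_ <= X)%R]card_ord -[n.+1 in X in (_ <= X)%R]card_ord -card_prod.
apply: INR_sum_le_card => [|p p_viol].
  by apply: Rmult_le_pos; [apply: pos_INR | lra].
apply: Rle_trans (violating_block_le eps_ge0 n_gt0 d_gt0 d_le_n p_viol x_bounds).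
apply: le_INRn; apply: leq_trans (card_bigcup_le _ _) _.
by apply: leq_sum => S _; apply: card_bigcup_le.
Qed.

End UnionBound.

Lemma mm_count_le n : 0 < n -> (mm n).+1 * n.+1 * mm n <= 18 * 32 ^ dd n.
Proof.
move=> n_gt0; rewrite /mm; set b := 2 ^ dd n.
have n4_lt : n ^ 4 < 2 * b by rewrite /b -expnS; apply: trunc_log_ltn.
have n2_le : n ^ 2 <= n ^ 4 by apply: leq_pexp2l.
have n_le : n <= n ^ 4 by rewrite -[n in n <= _]expn1; apply: leq_pexp2l.
have -> : 32 ^ dd n = b ^ 5 by rewrite /b -expnM mulnC expnM.
have b_gt0 : 0 < b by rewrite expn_gt0.
have m_le : n ^ 2 * b <= 2 * b ^ 2 by rewrite mulnA leq_mul2r; lia.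
have m1_le : (n ^ 2 * b).+1 <= 3 * b ^ 2 by rewrite (expnS b) expn1 in m_le *; nia.
have n1_le : n.+1 <= 3 * b by lia.
apply: leq_trans (leq_mul (leq_mul m1_le n1_le) m_le) _.
by rewrite (_ : b ^ 5 = b ^ 2 * b * b ^ 2) -?expnSr -?expnD //; lia.
Qed.

Lemma dd_ge n D : 2 ^ D <= n -> D <= dd n.
Proof.
move=> D_le; apply: trunc_log_max => //; apply: leq_trans D_le _.
by case: n => // n; rewrite -[X in X <= _]expn1 leq_pexp2l.
Qed.

Lemma linear_le_exp2 k : 6 <= k -> 8 * k + 6 <= 2 ^ k.
Proof.
elim: k => // k IH; rewrite leq_eqVlt => /orP[/eqP <- // | k_ge6].
by rewrite expnS; have := IH k_ge6; lia.
Qed.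

Lemma double_dd_le n : 64 <= n -> 2 * dd n <= n.
Proof.
move=> n_ge; set k := trunc_log 2 n.
have k_ge6 : 6 <= k by apply: trunc_log_max.
have n_lt : n < 2 ^ k.+1 by apply: trunc_log_ltn.
have dd_lt : dd n < 4 * k.+1.
  rewrite -(ltn_exp2l _ _ (isT : 1 < 2)) mulnC expnM.
  apply: leq_ltn_trans (trunc_logP _ _) _ => //; first by rewrite expn_gt0; lia.
  by rewrite ltn_exp2r.
have := linear_le_exp2 k_ge6; have : 2 ^ k <= n by apply: trunc_logP => //; lia.
lia.
Qed.

Lemma rate_eventually_small eps : (0 < eps)%R ->
  exists D, forall d, D <= d -> (32 * rate eps d <= / 2)%R.
Proof.
move=> eps_gt0; have [D D_gt] := INR_unbounded (Rpower 1024 (/ eps)).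
exists D => d D_le; have := le_INRn D_le.
set P := Rpower (INR d) eps => d_ge.
have P_ge : (1024 <= P)%R.
  have <- : Rpower (Rpower 1024 (/ eps)) eps = 1024%R.
    by rewrite Rpower_mult Rinv_l ?Rpower_1; lra.
  by apply: Rle_Rpower_l; [lra | split; [apply: exp_pos | lra]].
have invP_le : (/ P <= / 1024)%R by apply: Rinv_le_contravar; lra.
have := exp_le_3; have := exp_pos 1; have := Rinv_0_lt_compat P ltac:(lra).
rewrite /rate Rpower_Ropp -/P; nra.
Qed.

Lemma count_rate_le eps n : 0 < n -> (32 * rate eps (dd n) <= / 2)%R ->
  (INR ((mm n).+1 * n.+1) * (INR (mm n) * rate eps (dd n) ^ dd n)
     <= 18 / INR (2 ^ dd n))%R.
Proof.
move=> n_gt0 rate_le; have rate_ge0 := rate_ge0 eps (dd n).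
rewrite -Rmult_assoc -INR_muln.
apply: (Rle_trans _ (INR (18 * 32 ^ dd n) * rate eps (dd n) ^ dd n)).
  by apply: Rmult_le_compat_r; [apply: pow_le | apply: le_INRn; apply: mm_count_le].
rewrite INR_muln !INR_expn Rmult_assoc -Rpow_mult_distr /Rdiv -pow_inv !INR_IZR_INZ /=.
apply: Rmult_le_compat_l; first lra.
by apply: pow_incr; split; [apply: Rmult_le_pos; lra | lra].
Qed.

Lemma prob_expanding_ge eps m n d delta : 0 < #|formulas m n d| ->
  (INR #|nonexpanding eps n d m| <= delta * INR #|formulas m n d|)%R ->
  (1 - delta <= prob_expanding eps m n d)%R.
Proof.
move=> F_gt0 bad_le.
set E := [set F : {ffun 'I_m -> {set lit n}} | pb (expanding eps d F)].
have good_eq : [set F in formulas m n d | pb (expanding eps d F)] = formulas m n d :&: E.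
  by apply/setP => F; rewrite !inE.
have bad_eq : nonexpanding eps n d m = formulas m n d :\: E.
  by apply/setP => F; rewrite !inE andbC.
have FR_gt0 : (0 < INR #|formulas m n d|)%R by apply: lt_0_INR; apply/ltP.
move: bad_le FR_gt0; rewrite /prob_expanding good_eq bad_eq -(cardsID E (formulas m n d)).
rewrite plus_INR; set G := INR _; set B := INR _ => bad_le FR_gt0.
apply: (Rmult_le_reg_r _ _ _ FR_gt0); rewrite /Rdiv Rmult_assoc Rinv_l; last lra.
by rewrite Rmult_1_r Rmult_minus_distr_r Rmult_1_l; lra.
Qed.

Lemma prob_expanding_mm_ge eps delta n : (0 <= eps)%R -> 64 <= n ->
  (32 * rate eps (dd n) <= / 2)%R -> (18 <= delta * INR (2 ^ dd n))%R ->
  (18 <= INR (2 ^ dd n))%R -> (1 - delta <= prob_expanding eps (mm n) n (dd n))%R.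
Proof.
move=> eps_ge0 n_ge rate_le delta_big pow_big.
have n_gt0 : 0 < n by lia.
have d_le_n : 2 * dd n <= n by apply: double_dd_le.
have d_gt0 : 0 < dd n by case: (posnP (dd n)) pow_big => [-> /=|//]; lra.
have powR_gt0 : (0 < INR (2 ^ dd n))%R by apply: lt_0_INR; apply/ltP; rewrite expn_gt0.
have := count_rate_le n_gt0 rate_le.
set x := (INR (mm n) * rate eps (dd n) ^ dd n)%R => total_le.
have ratio_le1 : (18 / INR (2 ^ dd n) <= 1)%R.
  by apply: (Rmult_le_reg_r _ _ _ powR_gt0); rewrite /Rdiv Rmult_assoc Rinv_l; lra.
have ratio_le_delta : (18 / INR (2 ^ dd n) <= delta)%R.
  by apply: (Rmult_le_reg_r _ _ _ powR_gt0); rewrite /Rdiv Rmult_assoc Rinv_l; lra.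
have x_ge0 : (0 <= x)%R by apply: Rmult_le_pos; [apply: pos_INR | apply: pow_le; apply: rate_ge0].
have x_le : (x <= INR ((mm n).+1 * n.+1) * x)%R.
  rewrite -[X in (X <= _)%R]Rmult_1_l; apply: Rmult_le_compat_r => //.
  by apply: (@le_INRn 1); rewrite muln_gt0.
apply: prob_expanding_ge.
  have clauses_gt0 : 0 < #|clauses n (dd n)|.
    by apply: leq_trans (bin_le_card_clauses n _); rewrite bin_gt0; lia.
  by rewrite card_formulas expn_gt0 clauses_gt0.
apply: Rle_trans (card_nonexpanding_le eps_ge0 n_gt0 d_gt0 d_le_n _) _; first by rewrite -/x; lra.
rewrite (Rmult_comm delta) -Rmult_assoc (Rmult_comm (INR _)) Rmult_assoc.
by apply: Rmult_le_compat_l; [apply: pos_INR | rewrite -/x; lra].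
Qed.

Theorem mainTheorem7 :
  forall eps : R, Rlt 0 eps -> Rlt eps 1 ->
  forall delta : R, Rlt 0 delta ->
  exists N : nat, forall n : nat, (N <= n)%nat ->
    Rle (Rminus 1 delta) (prob_expanding eps (mm n) n (dd n)).
Proof.
move=> eps eps_gt0 _ delta delta_gt0.
have [D1 rate_small] := rate_eventually_small eps_gt0.
have [D2 D2_gt] := INR_unbounded (18 / delta).
exists (2 ^ (D1 + D2 + 5) + 64) => n n_ge.
have d_ge : D1 + D2 + 5 <= dd n by apply: dd_ge; lia.
have pow_ge : (INR D2 <= INR (2 ^ dd n))%R.
  by apply: le_INRn; apply: leq_trans (ltnW (ltn_expl _ (isT : 1 < 2))); lia.
apply: prob_expanding_mm_ge; [lra | lia | apply: rate_small; lia | |].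
- have := Rmult_lt_compat_l _ _ _ delta_gt0 D2_gt.
  rewrite (_ : delta * (18 / delta) = 18)%R; last by field; lra.
  by have := Rmult_le_compat_l _ _ _ (Rlt_le _ _ delta_gt0) pow_ge; lra.
- apply: Rle_trans (le_INRn (leq_pexp2l (isT : 0 < 2) (_ : 5 <= dd n))); last lia.
  by rewrite INR_IZR_INZ /=; lra.
Qed.
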